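(* Let $\gamma:[0,1]\to\mathbb{R}^2$ be a $C^1$ curve of constant speed $c>0$ which is not closed ($\gamma(0)\neq\gamma(1)$), whose turning angle function $\theta$ satisfies $\theta(1)-\theta(0)=2\pi m$ with $0\neq m\in\mathbb{Z}$. Let $k\ge 3$ and $\sigma\in S_k$. Then there exist cuts $C\in\operatorname{int}(D_k)$ such that the rearranged curve $r_{\sigma,C}$ is a closed $C^1$ curve if and only if $\sigma\in S_k\setminus Z_k$, i.e. $\sigma$ is not a cyclic shift.
   Context: A turning angle function is a continuous $\theta$ with $\gamma'(s)=c(\cos\theta(s),\sin\theta(s))$. Concatenation $\alpha*\beta$ of two $C^1$ planar curves of the same constant speed ($\alpha$ on $[a_1,b_1]$, $\beta$ on $[a_2,b_2]$) is the curve on $[0,(b_1-a_1)+(b_2-a_2)]$ equal to $\alpha(s+a_1)$ for $s\le b_1-a_1$ and to $T(\beta(s-(b_1-a_1)+a_2))$ afterwards, where $T$ is the orientation-preserving rigid motion sending $\beta(a_2)$ to $\alpha(b_1)$ and the unit tangent of $\beta$ at $a_2$ to that of $\alpha$ at $b_1$; it is associative. Let $D_k=\{(c_1,\dots,c_{k-1})\in[0,1]^{k-1}: 0\le c_1\le\dots\le c_{k-1}\le 1\}$, with interior $\operatorname{int}(D_k)$ in $\mathbb{R}^{k-1}$; set $c_0=0$, $c_k=1$. For $C\in D_k$ let $\gamma_i$ be the restriction of $\gamma$ to $[c_{i-1},c_i]$, $i=1,\dots,k$ (a degenerate arc is a point carrying the tangent direction of $\gamma$ there). For $\sigma\in S_k$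 (permutations of $\{1,\dots,k\}$), $r_{\sigma,C}:=\gamma_{\sigma(1)}*\gamma_{\sigma(2)}*\dots*\gamma_{\sigma(k)}$, parametrized over $[0,1]$ (and moved by a rigid motion to start at the origin with initial tangent along the positive $x$-axis). A closed $C^1$ curve means $r_{\sigma,C}(0)=r_{\sigma,C}(1)$ and equal tangents there. $Z_k=\{z_0,\dots,z_{k-1}\}\subseteq S_k$ is the subgroup of cyclic shifts, $z_h(i)=i+h$ if $i\le k-h$ and $z_h(i)=i+h-k$ if $i>k-h$. *)

From Stdlib Require Import Reals ZArith.
From mathcomp Require Import all_boot all_fingroup.

Set Implicit Arguments.
Unset Strict Implicit.
Unset Printing Implicit Defensive.

Open Scope R_scope.

Definition pt2 := (R * R)%type.
Definition padd (p q : pt2) : pt2 := (fst p + fst q, snd p + snd q).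
Definition psub (p q : pt2) : pt2 := (fst p - fst q, snd p - snd q).
Definition rot (a : R) (p : pt2) : pt2 :=
  (cos a * fst p - sin a * snd p, sin a * fst p + cos a * snd p).

Definition deriv01 (f : R -> R) (s l : R) : Prop :=
  forall eps, 0 < eps -> exists delta, 0 < delta /\
    forall t, 0 <= t <= 1 -> t <> s -> Rabs (t - s) < delta ->
      Rabs ((f t - f s) / (t - s) - l) < eps.

Definition cont01 (f : R -> R) (s : R) : Prop :=
  forall eps, 0 < eps -> exists delta, 0 < delta /\
    forall t, 0 <= t <= 1 -> Rabs (t - s) < delta -> Rabs (f t - f s) < eps.

(** A planar arc parametrized on [0, alen], carrying (as angles) the unit
    tangent directions at its start and end point.  Carrying the tangents
    makes sense of degenerate arcs ("a point carrying a tangent direction"). *)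
Record arc := mkArc {
  alen  : R;
  apt   : R -> pt2;
  aang0 : R;   (* unit tangent at start = (cos aang0, sin aang0) *)
  aang1 : R    (* unit tangent at end   = (cos aang1, sin aang1) *)
}.

(** Concatenation alpha * beta: beta is moved by the orientation-preserving
    rigid motion T sending beta's start point to alpha's end point and
    beta's start tangent to alpha's end tangent. *)
Definition concat (a b : arc) : arc :=
  mkArc (alen a + alen b)
    (fun s => if Rle_dec s (alen a) then apt a s
              else padd (apt a (alen a))
                        (rot (aang1 a - aang0 b)
                             (psub (apt b (s - alen a)) (apt b 0))))
    (aang0 a) (aang1 b + (aang1 a - aang0 b)).

Definition concat_seq (l : seq arc) : arc :=
  match l with
  | [::] => mkArc 0 (fun _ => (0, 0)) 0 0
  | a :: t => foldl concat a t
  end.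

(** Move an arc by a rigid motion so that it starts at the origin with
    initial tangent along the positive x-axis. *)
Definition normalize (a : arc) : arc :=
  mkArc (alen a) (fun s => rot (- aang0 a) (psub (apt a s) (apt a 0)))
        0 (aang1 a - aang0 a).

Definition sub_arc (gamma : R -> pt2) (theta : R -> R) (x y : R) : arc :=
  mkArc (y - x) (fun s => gamma (s + x)) (theta x) (theta y).

Definition cutv (k : nat) (C : nat -> R) (i : nat) : R :=
  if Nat.eqb i 0 then 0 else if Nat.eqb i k then 1 else C i.

Definition in_int_Dk (k : nat) (C : nat -> R) : Prop :=
  forall i : nat, (i < k)%nat -> cutv k C i < cutv k C (S i).

(** The i-th arc gamma_{i+1} (0-indexed i : 'I_k) is gamma on [c_i, c_{i+1}]. *)
Definition piece (gamma : R -> pt2) (theta : R -> R) (k : nat) (C : nat -> R)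
  (i : 'I_k) : arc :=
  sub_arc gamma theta (cutv k C i) (cutv k C (S i)).

Definition rearr (gamma : R -> pt2) (theta : R -> R) (k : nat) (sigma : 'S_k)
  (C : nat -> R) : arc :=
  normalize (concat_seq [seq piece gamma theta C (sigma j) | j <- enum 'I_k]).

Definition closed_C1 (a : arc) : Prop :=
  apt a 0 = apt a (alen a) /\
  cos (aang0 a) = cos (aang1 a) /\ sin (aang0 a) = sin (aang1 a).

(** sigma is in Z_k (0-indexed: z_h(i) = (i + h) mod k). *)
Definition is_cyclic_shift (k : nat) (sigma : 'S_k) : Prop :=
  exists h : nat, (h < k)%nat /\
    forall i : 'I_k, nat_of_ord (sigma i) = ((nat_of_ord i + h) %% k)%nat.

(* The rearranged curve closes up exactly when the sum of the chords of its arcs, each rotated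
   so that consecutive tangents match, vanishes: its total turning is theta(1) - theta(0), a
   multiple of 2 pi, so the tangents always match at the ends.
   For a cyclic shift the rearranged curve runs over [c_h, 1] and then over [0, c_h]; the two
   chords add up to a rotation of gamma(1) - gamma(0), which is nonzero.
   Otherwise some i1 < i2 < i3 occur in sigma in non-cyclic order. Let the three cuts after
   the arcs i1, i2, i3 range over a square, with all other arcs of length proportional to a
   bump vanishing on its boundary. On each side of the square only two arcs survive and the
   chord sum is gamma(1) - gamma(0) rotated by -theta at a point moving from 0 to 0 or to 1,
   so along the boundary it winds m times, because the order is non-cyclic. A continuous
   map of the square that misses the origin has zero winding along the boundary (add up the
   angle increments over a fine grid), hence the chord sum vanishes at an interior point of
   the square, where the cuts lie in int(D_k). *)

From Stdlib Require Import Reals ZArith Lra Lia Psatz FunctionalExtensionality Classical ClassicalEpsilon.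
From Coquelicot Require Import Coquelicot.
From mathcomp Require Import all_boot all_fingroup zify.
Set Implicit Arguments.
Unset Strict Implicit.
Unset Printing Implicit Defensive.
Open Scope R_scope.

(** * Rotations and angles in the plane *)

Lemma pt2_ext (p q : pt2) : fst p = fst q -> snd p = snd q -> p = q.
Proof. by case: p q => [? ?] [? ?] /= -> ->. Qed.

Definition scal2 (l : R) (p : pt2) : pt2 := (l * fst p, l * snd p).

Lemma rotD a b p : rot a (rot b p) = rot (a + b) p.
Proof. apply: pt2_ext; rewrite /= cos_plus sin_plus; ring. Qed.

Lemma rot0 p : rot 0 p = p.
Proof. apply: pt2_ext; rewrite /= cos_0 sin_0; ring. Qed.

Lemma rot_padd a p q : rot a (padd p q) = padd (rot a p) (rot a q).
Proof. apply: pt2_ext => /=; ring. Qed.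

Lemma rot_scal2 a l p : rot a (scal2 l p) = scal2 l (rot a p).
Proof. apply: pt2_ext => /=; ring. Qed.

Lemma rot_origin a : rot a (0, 0) = (0, 0).
Proof. apply: pt2_ext => /=; ring. Qed.

Lemma rot_eq_origin a p : rot a p = (0, 0) -> p = (0, 0).
Proof. by move/(f_equal (rot (- a))); rewrite rotD Rplus_opp_l rot0 rot_origin. Qed.

Lemma cos_sin_period x (m : Z) :
  cos (x + 2 * PI * IZR m) = cos x /\ sin (x + 2 * PI * IZR m) = sin x.
Proof.
  have [n [-> | ->]] : exists n, IZR m = INR n \/ IZR m = - INR n.
  { exists (Z.abs_nat m); rewrite INR_IZR_INZ Zabs2Nat.id_abs.
    case: (Z.abs_spec m) => [[_ ->] | [_ ->]]; [left | right]; rewrite ?opp_IZR; lra. }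
  - have -> : x + 2 * PI * INR n = x + 2 * INR n * PI by ring.
    by rewrite cos_period sin_period.
  - have -> : x = x + 2 * PI * - INR n + 2 * INR n * PI by ring.
    by rewrite cos_period sin_period; split; f_equal; ring.
Qed.

Lemma rot_period x m p : rot (x + 2 * PI * IZR m) p = rot x p.
Proof. by rewrite /rot; have [-> ->] := cos_sin_period x m. Qed.
Definition dot (p q : pt2) : R := fst p * fst q + snd p * snd q.
Definition cross (p q : pt2) : R := fst p * snd q - snd p * fst q.
(* The angle from [p] to [q]; meaningful when [dot p q > 0]. *)
Definition ang (p q : pt2) : R := atan (cross p q / dot p q).

Lemma dot_self_gt0 p : p <> (0, 0) -> 0 < dot p p.
Proof.
  case: p => [x y] Hp; rewrite /dot /=.
  have [Ex | Hx] := Req_dec x 0.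
  - have Hy : y <> 0 by move=> Ey; apply: Hp; rewrite Ex Ey.
    have := Rsqr_pos_lt y Hy; rewrite Ex /Rsqr; lra.
  - have := Rsqr_pos_lt x Hx; have := Rle_0_sqr y; rewrite /Rsqr; lra.
Qed.

Lemma dot_gt0_neq0 p q : 0 < dot p q -> p <> (0, 0).
Proof. by move=> Hd Ep; move: Hd; rewrite Ep /dot /=; lra. Qed.

Lemma ang_bound p q : - PI / 2 < ang p q < PI / 2.
Proof. exact: atan_bound. Qed.

Lemma angC p q : ang q p = - ang p q.
Proof.
  rewrite /ang -atan_opp; have -> : dot q p = dot p q by rewrite /dot; ring.
  by rewrite /cross /Rdiv; congr atan; ring.
Qed.

Lemma rot_ang p q : 0 < dot p q -> exists2 l, 0 < l & rot (ang p q) p = scal2 l q.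
Proof.
  move=> Hd; have Hp := dot_self_gt0 (dot_gt0_neq0 Hd).
  rewrite /ang /rot cos_atan sin_atan.
  set z := cross p q / dot p q.
  have Hs : 0 < sqrt (1 + z²) by apply: sqrt_lt_R0; have := Rle_0_sqr z; lra.
  exists (dot p p / (dot p q * sqrt (1 + z²))).
    by apply: Rdiv_lt_0_compat; [lra | nra].
  move: Hd Hp Hs; rewrite /z /scal2 /cross /dot => Hd Hp Hs.
  by apply: pt2_ext => /=; field; split; apply: Rgt_not_eq.
Qed.

Lemma dot_rot x p q : dot (rot x p) (rot x q) = dot p q.
Proof.
  have E := sin2_cos2 x; rewrite /Rsqr in E.
  by rewrite -[RHS]Rmult_1_l -E /dot /=; ring.
Qed.

Lemma dot_rotr x p : dot p (rot x p) = cos x * dot p p.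
Proof. rewrite /dot /=; ring. Qed.

Lemma cross_rotr x p : cross p (rot x p) = sin x * dot p p.
Proof. rewrite /cross /dot /=; ring. Qed.

Lemma rot_fixed_dir x p l : p <> (0, 0) -> 0 < l -> rot x p = scal2 l p ->
  - (2 * PI) < x < 2 * PI -> x = 0.
Proof.
  move=> /dot_self_gt0 Hp Hl Hr Hx.
  have Hp0 := Rgt_not_eq _ _ Hp.
  have Hl1 : l = 1.
    have E : l * l * dot p p = 1 * dot p p.
      by rewrite -[in RHS](dot_rot x) Hr /dot /scal2 /=; ring.
    by have := Rmult_eq_reg_r _ _ _ E Hp0; nra.
  have Hc : cos x = 1.
    apply: (Rmult_eq_reg_r _ _ _ _ Hp0).
    by rewrite -dot_rotr Hr Hl1 /dot /scal2 /=; ring.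
  have Hs : sin x = 0.
    apply: (Rmult_eq_reg_r _ _ _ _ Hp0).
    by rewrite -cross_rotr Hr Hl1 /cross /scal2 /=; ring.
  have [n Hn] := sin_eq_0_0 x Hs.
  have Hpi := PI_RGT_0.
  have Hn2 : (-2 < n < 2)%Z by split; apply: lt_IZR; rewrite Hn in Hx; simpl; nra.
  have Hn1 : n <> 1%Z /\ n <> (-1)%Z.
    by split=> En; move: Hc; rewrite Hn En /= ?Rmult_1_l -?Ropp_mult_distr_l ?Rmult_1_l
        ?cos_neg cos_PI; lra.
  have En : n = 0%Z by lia.
  by rewrite Hn En Rmult_0_l.
Qed.

Lemma ang_rotr y p : p <> (0, 0) -> - (PI / 2) < y < PI / 2 -> ang p (rot y p) = y.
Proof.
  move=> /dot_self_gt0 Hp [Hy1 Hy2]; have Hc := cos_gt_0 _ Hy1 Hy2.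
  rewrite /ang dot_rotr cross_rotr -[RHS]atan_tan //; congr atan.
  by rewrite /tan; field; split; apply: Rgt_not_eq.
Qed.

Lemma ang_quadrilateral p1 p2 p3 p4 :
  0 < dot p1 p2 -> 0 < dot p2 p3 -> 0 < dot p3 p4 -> 0 < dot p4 p1 ->
  ang p1 p2 + ang p2 p3 + ang p3 p4 + ang p4 p1 = 0.
Proof.
  move=> H12 H23 H34 H41.
  have [l1 Hl1 R1] := rot_ang H12; have [l2 Hl2 R2] := rot_ang H23.
  have [l3 Hl3 R3] := rot_ang H34; have [l4 Hl4 R4] := rot_ang H41.
  apply: (@rot_fixed_dir _ p1 (l4 * l3 * l2 * l1)).
  - exact: dot_gt0_neq0 H12.
  - by repeat apply: Rmult_lt_0_compat.
  - have -> : ang p1 p2 + ang p2 p3 + ang p3 p4 + ang p4 p1 =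
      ang p4 p1 + (ang p3 p4 + (ang p2 p3 + ang p1 p2)) by ring.
    rewrite -!rotD R1 !rot_scal2 R2 !rot_scal2 R3 !rot_scal2 R4.
    by apply: pt2_ext => /=; ring.
  - have := ang_bound p1 p2; have := ang_bound p2 p3; have := ang_bound p3 p4.
    have := ang_bound p4 p1; have := PI_RGT_0; lra.
Qed.

Lemma mul_near_ge t p q r : Rabs (p - t) < r -> Rabs (q - t) < r ->
  Rabs t * Rabs t - 2 * r * Rabs t - r * r <= p * q.
Proof.
  move=> /Rabs_def2 Hp /Rabs_def2 Hq.
  by case: (Rle_lt_dec 0 t) => Ht; [rewrite (Rabs_right t) | rewrite (Rabs_left t)]; nra.
Qed.

Lemma dot_gt0_near t p q r : 8 * r <= Rabs (fst t) + Rabs (snd t) ->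
  Rabs (fst p - fst t) < r -> Rabs (snd p - snd t) < r ->
  Rabs (fst q - fst t) < r -> Rabs (snd q - snd t) < r -> 0 < dot p q.
Proof.
  move=> Ht H1 H2 H3 H4; rewrite /dot.
  have := mul_near_ge H1 H3; have := mul_near_ge H2 H4.
  have := Rabs_pos (fst p - fst t); have := Rabs_pos (fst t); have := Rabs_pos (snd t).
  have := Rle_0_sqr (Rabs (fst t) - Rabs (snd t)); rewrite /Rsqr => *.
  have : 0 <= (Rabs (fst t) + Rabs (snd t) - 8 * r) * ((Rabs (fst t) + Rabs (snd t)) / 2 + 2 * r).
    by apply: Rmult_le_pos; lra.
  nra.
Qed.

(** * A discrete winding-number argument on the unit square *)

Definition in01 (x : R) : Prop := 0 <= x <= 1.

Lemma in01_0 : in01 0. Proof. by rewrite /in01; lra. Qed.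
Lemma in01_1 : in01 1. Proof. by rewrite /in01; lra. Qed.

Lemma square_lebesgue (P : R -> R -> R -> R -> Prop) :
  (forall x y, in01 x -> in01 y -> exists2 d, 0 < d &
     forall u v u' v', in01 u -> in01 v -> in01 u' -> in01 v' ->
       Rabs (u - x) < d -> Rabs (v - y) < d -> Rabs (u' - x) < d -> Rabs (v' - y) < d ->
       P u v u' v') ->
  exists2 d, 0 < d & forall u v u' v', in01 u -> in01 v -> in01 u' -> in01 v' ->
    Rabs (u - u') < d -> Rabs (v - v') < d -> P u v u' v'.
Proof.
  move=> Hloc.
  have Hgauge x y : exists d : posreal, in01 x -> in01 y -> forall u v u' v',
      in01 u -> in01 v -> in01 u' -> in01 v' ->
      Rabs (u - x) < 2 * d -> Rabs (v - y) < 2 * d -> Rabs (u' - x) < 2 * d ->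
      Rabs (v' - y) < 2 * d -> P u v u' v'.
  { case: (classic (in01 x /\ in01 y)) => [[Hx Hy] | Hxy]; last first.
      by exists (mkposreal 1 Rlt_0_1) => Hx Hy; case: Hxy.
    have [d Hd HP] := Hloc x y Hx Hy.
    exists (mkposreal (d / 2) ltac:(lra)) => _ _ u v u' v' Hu Hv Hu' Hv' /= *.
    by apply: HP => //; lra. }
  pose gauge x y := proj1_sig (constructive_indefinite_description _ (Hgauge x y)).
  have Hg x y := proj2_sig (constructive_indefinite_description _ (Hgauge x y)).
  have [d Hd] := compactness_value_2d 0 1 0 1 gauge.
  exists d; first exact: cond_pos.
  move=> u v u' v' Hu Hv Hu' Hv' Huu Hvv; apply: NNPP => HnP.
  apply: (Hd u v Hu Hv) => -[x [y [Hx [Hy [Hux [Hvy Hdg]]]]]]; apply: HnP.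
  have := Rabs_triang (u' - u) (u - x); have := Rabs_triang (v' - v) (v - y).
  rewrite Rabs_minus_sym in Huu; rewrite Rabs_minus_sym in Hvv.
  have Eu : u' - u + (u - x) = u' - x by ring.
  have Ev : v' - v + (v - y) = v' - y by ring.
  have := cond_pos (gauge x y).
  rewrite Eu Ev /gauge => Hg0 Tv Tu; rewrite /gauge in Hux Hvy Hdg; apply: (Hg x y) => //; lra.
Qed.

Definition continuous2 (f : R -> R -> R) : Prop :=
  forall u v, continuous (fun z : R * R => f (fst z) (snd z)) (u, v).

Lemma continuous2_near f u v eps : continuous2 f -> 0 < eps ->
  exists2 d, 0 < d & forall u' v', Rabs (u' - u) < d -> Rabs (v' - v) < d ->
    Rabs (f u' v' - f u v) < eps.
Proof.
  move=> Hf Heps; have /filterlim_locally {}Hf := Hf u v.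
  have [d Hd] := Hf (mkposreal eps Heps); exists d; first exact: cond_pos.
  by move=> u' v' Hu Hv; apply: (Hd (u', v')).
Qed.

Lemma continuous2_plus f g : continuous2 f -> continuous2 g -> continuous2 (fun u v => f u v + g u v).
Proof. by move=> Hf Hg u v; apply: continuous_plus; [apply: Hf | apply: Hg]. Qed.

Lemma continuous2_minus f g : continuous2 f -> continuous2 g -> continuous2 (fun u v => f u v - g u v).
Proof. by move=> Hf Hg u v; apply: continuous_minus; [apply: Hf | apply: Hg]. Qed.

Lemma continuous2_mult f g : continuous2 f -> continuous2 g -> continuous2 (fun u v => f u v * g u v).
Proof. by move=> Hf Hg u v; apply: continuous_mult; [apply: Hf | apply: Hg]. Qed.

Lemma continuous2_comp (g : R -> R) f : (forall x, continuous g x) -> continuous2 f ->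
  continuous2 (fun u v => g (f u v)).
Proof. by move=> Hg Hf u v; apply: continuous_comp; [apply: Hf | apply: Hg]. Qed.

Lemma continuous2_const a : continuous2 (fun _ _ => a).
Proof. by move=> u v; apply: continuous_const. Qed.

Lemma continuous2_fst : continuous2 (fun u _ => u).
Proof. by move=> u v; apply: continuous_fst. Qed.

Lemma continuous2_snd : continuous2 (fun _ v => v).
Proof. by move=> u v; apply: continuous_snd. Qed.

Ltac continuity2 :=
  repeat first [ apply: continuous2_minus | apply: continuous2_plus | apply: continuous2_mult
               | apply: continuous2_const | apply: continuous2_fst | apply: continuous2_snd ].

Lemma uniform_cont01 (f : R -> R) eps : (forall x, continuous f x) -> 0 < eps ->
  exists2 d, 0 < d & forall s s', in01 s -> in01 s' -> Rabs (s - s') < d ->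
    Rabs (f s - f s') < eps.
Proof.
  move=> Hf Heps.
  have Hc x : 0 <= x <= 1 -> continuity_pt f x by move=> _; apply/continuity_pt_filterlim/Hf.
  have [d Hd] := Heine f _ (compact_P3 0 1) Hc (mkposreal eps Heps).
  by exists d; [exact: cond_pos | apply: Hd].
Qed.

Lemma abs_sum_gt0 t : t <> (0, 0) -> 0 < Rabs (fst t) + Rabs (snd t).
Proof.
  case: t => a b Ht /=; have := Rabs_pos a; have := Rabs_pos b.
  case: (Req_dec a 0) => [Ea | /Rabs_pos_lt]; last lra.
  have /Rabs_pos_lt : b <> 0 by move=> Eb; apply: Ht; rewrite Ea Eb.
  lra.
Qed.

Lemma uniform_dot_gt0 (G : R -> R -> pt2) :
  continuous2 (fun u v => fst (G u v)) -> continuous2 (fun u v => snd (G u v)) ->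
  (forall u v, in01 u -> in01 v -> G u v <> (0, 0)) ->
  exists2 d, 0 < d & forall u v u' v', in01 u -> in01 v -> in01 u' -> in01 v' ->
    Rabs (u - u') < d -> Rabs (v - v') < d -> 0 < dot (G u v) (G u' v').
Proof.
  move=> H1 H2 HG; apply: square_lebesgue => x y Hx Hy.
  pose r := (Rabs (fst (G x y)) + Rabs (snd (G x y))) / 8.
  have Hr : 0 < r by have := abs_sum_gt0 (HG x y Hx Hy); rewrite /r; lra.
  have [d1 Hd1 C1] := continuous2_near x y H1 Hr.
  have [d2 Hd2 C2] := continuous2_near x y H2 Hr.
  exists (Rmin d1 d2); first exact: Rmin_pos.
  move=> u v u' v' _ _ _ _ /Rmin_Rgt [? ?] /Rmin_Rgt [? ?] /Rmin_Rgt [? ?] /Rmin_Rgt [? ?].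
  by apply: (@dot_gt0_near (G x y) _ _ r); [rewrite /r; lra | apply: C1 | apply: C2 | apply: C1 | apply: C2].
Qed.

Fixpoint sumN (f : nat -> R) (n : nat) : R :=
  if n is n'.+1 then sumN f n' + f n' else 0.

Lemma sumN_ext f g n : (forall i, (i < n)%N -> f i = g i) -> sumN f n = sumN g n.
Proof. by elim: n => //= n IH Hfg; rewrite IH ?Hfg // => i Hi; apply: Hfg; lia. Qed.

Lemma sumN_minus f g n : sumN (fun i => f i - g i) n = sumN f n - sumN g n.
Proof. by elim: n => /= [|n ->]; ring. Qed.

Lemma sumN_telescope f n : sumN (fun i => f i.+1 - f i) n = f n - f 0%N.
Proof. by elim: n => /= [|n ->]; ring. Qed.

Lemma grid_stokes (h w : nat -> nat -> R) N :
  (forall i j, (i < N)%N -> (j < N)%N -> h i j + w i.+1 j = h i j.+1 + w i j) ->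
  sumN (fun i => h i 0%N) N + sumN (w N) N = sumN (fun i => h i N) N + sumN (w 0%N) N.
Proof.
  move=> Hcell.
  have Hrow i : (i < N)%N -> h i N - h i 0%N = sumN (w i.+1) N - sumN (w i) N.
    move=> Hi; rewrite -sumN_telescope -sumN_minus; apply: sumN_ext => j Hj.
    by have := Hcell i j Hi Hj; lra.
  have := sumN_telescope (fun i => sumN (w i) N) N.
  rewrite -(sumN_ext (f := fun i => h i N - h i 0%N)) ?sumN_minus; first lra.
  by move=> i Hi; rewrite Hrow.
Qed.

Lemma sum_ang_rot (a : nat -> R) V N : V <> (0, 0) ->
  (forall i, (i < N)%N -> Rabs (a i.+1 - a i) < PI / 2) ->
  sumN (fun i => ang (rot (a i) V) (rot (a i.+1) V)) N = a N - a 0%N.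
Proof.
  move=> HV Ha; rewrite -sumN_telescope; apply: sumN_ext => i Hi.
  have -> : rot (a i.+1) V = rot (a i.+1 - a i) (rot (a i) V) by rewrite rotD; f_equal; ring.
  apply: ang_rotr; first by move/rot_eq_origin.
  by have := Ha i Hi; rewrite /Rabs; case: Rcase_abs; lra.
Qed.

Definition grid (N i : nat) : R := INR i / INR N.

Lemma grid0 N : grid N 0 = 0.
Proof. by rewrite /grid /= /Rdiv Rmult_0_l. Qed.

Section Grid.
Variable N : nat.
Hypothesis HN : (0 < N)%N.

Let INR_N_gt0 : 0 < INR N. Proof. by apply: lt_0_INR; lia. Qed.

Lemma grid_in01 i : (i <= N)%N -> in01 (grid N i).
Proof.
  move=> /leP /le_INR Hi; split; first exact: Rdiv_le_0_compat (pos_INR i) INR_N_gt0.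
  by apply: (Rmult_le_reg_r (INR N)) => //; rewrite /grid; field_simplify; lra.
Qed.

Lemma gridN : grid N N = 1.
Proof. by rewrite /grid; field; lra. Qed.

Lemma gridS i : grid N i.+1 = grid N i + / INR N.
Proof. by rewrite /grid S_INR; field; lra. Qed.

Lemma sum_ang_side (e : R -> R) V (Q : nat -> pt2) : V <> (0, 0) ->
  (forall s s', in01 s -> in01 s' -> Rabs (s - s') <= / INR N -> Rabs (e s - e s') < PI / 2) ->
  (forall i, (i <= N)%N -> Q i = rot (e (grid N i)) V) ->
  sumN (fun i => ang (Q i) (Q i.+1)) N = e 1 - e 0.
Proof.
  move=> HV Ue HQ; rewrite -(grid0 N) -gridN -(@sum_ang_rot (fun i => e (grid N i)) V N HV).
    by apply: sumN_ext => i Hi; rewrite !HQ //; lia.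
  move=> i Hi; apply: Ue; try (apply: grid_in01; lia).
  rewrite gridS (_ : grid N i + / INR N - grid N i = / INR N); last ring.
  by rewrite Rabs_right; have := Rinv_0_lt_compat _ INR_N_gt0; lra.
Qed.

End Grid.

Lemma boundary_winding_eq0 (G : R -> R -> pt2) (eb et el er : R -> R) (V : pt2) :
  V <> (0, 0) ->
  continuous2 (fun u v => fst (G u v)) -> continuous2 (fun u v => snd (G u v)) ->
  (forall u v, in01 u -> in01 v -> G u v <> (0, 0)) ->
  (forall x, continuous eb x) -> (forall x, continuous et x) ->
  (forall x, continuous el x) -> (forall x, continuous er x) ->
  (forall u, in01 u -> G u 0 = rot (eb u) V) -> (forall u, in01 u -> G u 1 = rot (et u) V) ->
  (forall v, in01 v -> G 0 v = rot (el v) V) -> (forall v, in01 v -> G 1 v = rot (er v) V) ->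
  eb 1 - eb 0 + (er 1 - er 0) = et 1 - et 0 + (el 1 - el 0).
Proof.
  move=> HV HG1 HG2 HG0 Cb Ct Cl Cr Eb Et El Er.
  have Hpi : 0 < PI / 2 by have := PI_RGT_0; lra.
  have [d0 Hd0 Hdot] := uniform_dot_gt0 HG1 HG2 HG0.
  have [db Hdb Ub] := uniform_cont01 Cb Hpi; have [dt Hdt Ut] := uniform_cont01 Ct Hpi.
  have [dl Hdl Ul] := uniform_cont01 Cl Hpi; have [dr Hdr Ur] := uniform_cont01 Cr Hpi.
  have Hd : 0 < Rmin d0 (Rmin (Rmin db dt) (Rmin dl dr)) by repeat apply: Rmin_pos.
  have [N [/Rmin_Rgt [HN0 /Rmin_Rgt [/Rmin_Rgt [HNb HNt] /Rmin_Rgt [HNl HNr]]] /ltP HN]] :=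
    archimed_cor1 _ Hd.
  have HNinv : 0 < / INR N by apply/Rinv_0_lt_compat/lt_0_INR/ltP.
  pose P i j := G (grid N i) (grid N j).
  have Hquad i j : (i < N)%N -> (j < N)%N ->
      [/\ 0 < dot (P i j) (P i.+1 j), 0 < dot (P i.+1 j) (P i.+1 j.+1),
          0 < dot (P i.+1 j.+1) (P i j.+1) & 0 < dot (P i j.+1) (P i j)].
    move=> Hi Hj; rewrite /P; split; apply: Hdot; try (apply: (grid_in01 HN); lia);
      by rewrite ?(gridS HN) /Rabs; case: Rcase_abs; lra.
  pose h i j := ang (P i j) (P i.+1 j).
  pose w i j := ang (P i j) (P i j.+1).
  have := @grid_stokes h w N.
  rewrite (@sum_ang_side N HN eb V (fun i => P i 0%N) HV) ?(@sum_ang_side N HN et V (fun i => P i N) HV)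
    ?(@sum_ang_side N HN er V (P N) HV) ?(@sum_ang_side N HN el V (P 0%N) HV) //.
  - apply=> i j Hi Hj; have [D1 D2 D3 D4] := Hquad i j Hi Hj.
    have := ang_quadrilateral D1 D2 D3 D4.
    by rewrite /h /w (angC (P i j.+1)) (angC (P i j)); lra.
  all: try by move=> s s' Hs Hs' Hss; first [apply: Ub | apply: Ut | apply: Ul | apply: Ur] => //; lra.
  all: move=> i Hi; rewrite /P ?grid0 ?(gridN HN).
  all: by first [apply: Eb | apply: Et | apply: El | apply: Er]; apply: (grid_in01 HN).
Qed.

(** * Displacement of a concatenation of arcs *)

Section Chains.
Variables (th : R -> R) (ga : R -> pt2) (c : nat -> R).

(* The displacement of the concatenation of the arcs of [ga] over [c i, c i.+1], i in [s],
   when the first arc starts in direction [psi]. *)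
Fixpoint chain_disp (psi : R) (s : seq nat) : pt2 :=
  if s is i :: t then
    padd (rot (psi - th (c i)) (psub (ga (c i.+1)) (ga (c i))))
         (chain_disp (psi + (th (c i.+1) - th (c i))) t)
  else (0, 0).

Fixpoint chain_turn (s : seq nat) : R :=
  if s is i :: t then th (c i.+1) - th (c i) + chain_turn t else 0.

Lemma chain_disp_rot psi phi s : chain_disp (psi + phi) s = rot phi (chain_disp psi s).
Proof.
  elim: s psi => [|i t IH] psi /=; first by rewrite rot_origin.
  rewrite rot_padd rotD -IH; congr (padd (rot _ _) (chain_disp _ _)); ring.
Qed.

Lemma chain_disp_cat psi s1 s2 :
  chain_disp psi (s1 ++ s2) = padd (chain_disp psi s1) (chain_disp (psi + chain_turn s1) s2).
Proof.
  elim: s1 psi => [|i t IH] psi /=.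
    by rewrite Rplus_0_r; apply: pt2_ext => /=; ring.
  rewrite IH Rplus_assoc; apply: pt2_ext => /=; ring.
Qed.

Lemma chain_turn_iota a n : chain_turn (iota a n) = th (c (a + n)%N) - th (c a).
Proof.
  elim: n a => [|n IH] a /=; first by rewrite addn0; ring.
  by rewrite IH addSnnS; ring.
Qed.

Lemma chain_disp_iota psi a n :
  chain_disp psi (iota a n) = rot (psi - th (c a)) (psub (ga (c (a + n)%N)) (ga (c a))).
Proof.
  elim: n a psi => [|n IH] a psi /=; first by rewrite addn0; apply: pt2_ext => /=; ring.
  rewrite IH addSnnS (_ : psi + (th (c a.+1) - th (c a)) - th (c a.+1) = psi - th (c a)); last ring.
  by apply: pt2_ext => /=; ring.
Qed.

Lemma chain_disp_filter (P : pred nat) psi s :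
  (forall i, i \in s -> ~~ P i -> c i = c i.+1) ->
  chain_disp psi s = chain_disp psi (filter P s).
Proof.
  elim: s psi => [|i t IH] psi //= Hflat.
  have {}IH psi' : chain_disp psi' t = chain_disp psi' (filter P t).
    by apply: IH => j Hj; apply: Hflat; rewrite inE Hj orbT.
  case: ifP => HP /=; first by rewrite IH.
  rewrite IH -(Hflat i (mem_head _ _)) ?HP // Rminus_diag Rplus_0_r.
  by apply: pt2_ext => /=; ring.
Qed.

Lemma chain_turn_perm s1 s2 : perm_eq s1 s2 -> chain_turn s1 = chain_turn s2.
Proof.
  have turn_rem x t : x \in t -> chain_turn t = th (c x.+1) - th (c x) + chain_turn (rem x t).
    elim: t => //= y t IH; rewrite inE eq_sym.
    by case: eqP => [-> | _] //= Hx; rewrite IH //; ring.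
  elim: s1 s2 => [|x s IH] s2 Hperm; first by case: s2 Hperm => // y t /perm_size.
  have Hx : x \in s2 by rewrite -(perm_mem Hperm) mem_head.
  rewrite (turn_rem x s2 Hx) /= (IH (rem x s2)) //.
  by rewrite -(perm_cons x) (perm_trans Hperm) // perm_to_rem.
Qed.

Lemma foldl_concat_sub_arcs (A : arc) s :
  0 <= alen A -> (forall i, i \in s -> c i < c i.+1) ->
  let B := foldl concat A [seq sub_arc ga th (c i) (c i.+1) | i <- s] in
  [/\ 0 <= alen B, aang0 B = aang0 A, aang1 B = aang1 A + chain_turn s,
      apt B 0 = apt A 0 & apt B (alen B) = padd (apt A (alen A)) (chain_disp (aang1 A) s)].
Proof.
  elim: s A => [|i t IH] A HA Hc /=.
    by split=> //; [ring | apply: pt2_ext => /=; ring].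
  have Hi := Hc i (mem_head _ _).
  have [||HB0 HB1 HB2 HB3 HB4] := IH (concat A (sub_arc ga th (c i) (c i.+1))).
  - by rewrite /=; lra.
  - by move=> j Hj; apply: Hc; rewrite inE Hj orbT.
  split=> //; rewrite ?HB1 ?HB2 ?HB3 ?HB4 /=.
  - ring.
  - by destruct Rle_dec; [| lra].
  - destruct Rle_dec; first lra.
    rewrite (_ : alen A + (c i.+1 - c i) - alen A + c i = c i.+1); last ring.
    rewrite Rplus_0_l (_ : th (c i.+1) + (aang1 A - th (c i)) = aang1 A + (th (c i.+1) - th (c i)));
      last ring.
    by apply: pt2_ext => /=; ring.
Qed.

End Chains.

Lemma eq_chain_disp th th' ga ga' c psi s :
  (forall i j, i \in s -> (j = i \/ j = i.+1) -> th (c j) = th' (c j) /\ ga (c j) = ga' (c j)) ->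
  chain_disp th ga c psi s = chain_disp th' ga' c psi s.
Proof.
  elim: s psi => [|i t IH] psi //= Heq.
  have [E1 E2] := Heq i i (mem_head _ _) (or_introl erefl).
  have [E3 E4] := Heq i i.+1 (mem_head _ _) (or_intror erefl).
  by rewrite E1 E2 E3 E4 IH // => i' j Hi'; apply: Heq; rewrite inE Hi' orbT.
Qed.

Lemma continuous2_chain_disp th ga (c : R -> R -> nat -> R) psi s :
  (forall x, continuous th x) ->
  (forall x, continuous (fun y => fst (ga y)) x) -> (forall x, continuous (fun y => snd (ga y)) x) ->
  (forall i, continuous2 (fun u v => c u v i)) -> continuous2 psi ->
  continuous2 (fun u v => fst (chain_disp th ga (c u v) (psi u v) s)) /\
  continuous2 (fun u v => snd (chain_disp th ga (c u v) (psi u v) s)).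
Proof.
  move=> Hth Hg1 Hg2 Hc; elim: s psi => [|i t IH] psi Hpsi /=.
    by split; apply: continuous2_const.
  have Cth j : continuous2 (fun u v => th (c u v j)) by apply: continuous2_comp.
  have Cg1 j : continuous2 (fun u v => fst (ga (c u v j))) :=
    @continuous2_comp (fun y => fst (ga y)) (fun u v => c u v j) Hg1 (Hc j).
  have Cg2 j : continuous2 (fun u v => snd (ga (c u v j))) :=
    @continuous2_comp (fun y => snd (ga y)) (fun u v => c u v j) Hg2 (Hc j).
  have Cang : continuous2 (fun u v => psi u v - th (c u v i)) by apply: continuous2_minus.
  have Ccos : continuous2 (fun u v => cos (psi u v - th (c u v i))) :=
    continuous2_comp continuous_cos Cang.
  have Csin : continuous2 (fun u v => sin (psi u v - th (c u v i))) :=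
    continuous2_comp continuous_sin Cang.
  have [IH1 IH2] := IH _ (continuous2_plus Hpsi (continuous2_minus (Cth i.+1) (Cth i))).
  by split; continuity2; auto.
Qed.

Definition perm_seq k (sigma : 'S_k) : seq nat := [seq val (sigma j) | j <- enum 'I_k].

Section PermSeq.
Variables (k : nat) (sigma : 'S_k).

Lemma size_perm_seq : size (perm_seq sigma) = k.
Proof. by rewrite size_map size_enum_ord. Qed.

Lemma perm_seq_uniq : uniq (perm_seq sigma).
Proof.
  rewrite /perm_seq (map_comp val sigma) (map_inj_uniq val_inj).
  by rewrite (map_inj_uniq (@perm_inj _ sigma)) enum_uniq.
Qed.

Lemma mem_perm_seq i : (i \in perm_seq sigma) = (i < k)%N.
Proof.
  apply/mapP/idP => [[j _ ->] | Hi]; first exact: ltn_ord.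
  by exists ((sigma^-1)%g (Ordinal Hi)); rewrite ?mem_enum ?permKV.
Qed.

Lemma perm_seq_iota : perm_eq (perm_seq sigma) (iota 0 k).
Proof. by apply: uniq_perm; rewrite ?perm_seq_uniq ?iota_uniq // => i; rewrite mem_perm_seq mem_iota. Qed.

Lemma nth_perm_seq (i : 'I_k) : nth 0%N (perm_seq sigma) i = sigma i.
Proof. by rewrite (nth_map i) ?size_enum_ord // nth_ord_enum. Qed.

End PermSeq.

Lemma cutv0 k C : cutv k C 0 = 0.
Proof. by []. Qed.

Lemma cutvk k C : (0 < k)%N -> cutv k C k = 1.
Proof. by case: k => // k _; rewrite /cutv /= Nat.eqb_refl. Qed.

Lemma closed_C1_sub_arcs th ga c s : s != [::] -> (forall i, i \in s -> c i < c i.+1) ->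
  closed_C1 (normalize (concat_seq [seq sub_arc ga th (c i) (c i.+1) | i <- s])) <->
  [/\ chain_disp th ga c 0 s = (0, 0), cos 0 = cos (chain_turn th c s)
     & sin 0 = sin (chain_turn th c s)].
Proof.
  case: s => [//|i t] _ Hpos; have Hi := Hpos i (mem_head _ _).
  have [||_ H0 H1 H2 H3] := @foldl_concat_sub_arcs th ga c (sub_arc ga th (c i) (c i.+1)) t.
  - by rewrite /=; lra.
  - by move=> j Hj; apply: Hpos; rewrite inE Hj orbT.
  rewrite /closed_C1 /normalize /= H0 H1 H2 H3 /= !Rplus_0_l.
  rewrite (_ : th (c i.+1) + _ - _ = th (c i.+1) - th (c i) + chain_turn th c t); last ring.
  rewrite (_ : c i.+1 - c i + c i = c i.+1); last ring.
  have -> : rot (- th (c i)) (psub (ga (c i)) (ga (c i))) = (0, 0) by apply: pt2_ext => /=; ring.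
  have -> : padd (rot (0 - th (c i)) (psub (ga (c i.+1)) (ga (c i))))
      (chain_disp th ga c (th (c i.+1) - th (c i)) t) =
      rot (- th (c i)) (psub (padd (ga (c i.+1)) (chain_disp th ga c (th (c i.+1)) t)) (ga (c i))).
    by rewrite Rminus_0_l [_ - _]/Rminus chain_disp_rot; apply: pt2_ext => /=; ring.
  by split=> [[E [Hc Hs]] | [E Hc Hs]]; split=> //; exact: esym E.
Qed.

Lemma rearr_closed_iff gamma theta k (sigma : 'S_k) C (m : Z) :
  (0 < k)%N -> in_int_Dk k C -> theta 1 - theta 0 = 2 * PI * IZR m ->
  closed_C1 (rearr gamma theta sigma C) <->
  chain_disp theta gamma (cutv k C) 0 (perm_seq sigma) = (0, 0).
Proof.
  move=> Hk HC Hth.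
  have Hturn : chain_turn theta (cutv k C) (perm_seq sigma) = 0 + 2 * PI * IZR m.
    by rewrite (chain_turn_perm _ _ (perm_seq_iota sigma)) chain_turn_iota cutvk // Hth; ring.
  rewrite /rearr (_ : [seq piece _ _ _ _ | _ <- _] =
    [seq sub_arc gamma theta (cutv k C i) (cutv k C i.+1) | i <- perm_seq sigma]); last first.
    by rewrite /perm_seq -map_comp.
  rewrite closed_C1_sub_arcs; last first.
  - by move=> j; rewrite mem_perm_seq => /HC.
  - by rewrite -size_eq0 size_perm_seq -lt0n.
  have [<- <-] := cos_sin_period 0 m; rewrite -Hturn.
  by split=> [[]|].
Qed.

(** * Cyclic shifts *)

Lemma chords_period (theta : R -> R) (gamma : R -> pt2) (m : Z) a x :
  theta 1 - theta 0 = 2 * PI * IZR m ->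
  padd (rot (a - theta x) (psub (gamma 1) (gamma x)))
       (rot (a + (theta 1 - theta x) - theta 0) (psub (gamma x) (gamma 0))) =
  rot (a - theta x) (psub (gamma 1) (gamma 0)).
Proof.
  move=> Hth; rewrite (_ : a + _ - _ = a - theta x + 2 * PI * IZR m) ?rot_period; last lra.
  by apply: pt2_ext => /=; ring.
Qed.

Lemma perm_seq_cyclic_shift k (sigma : 'S_k) : is_cyclic_shift sigma ->
  exists2 h, (h < k)%N & perm_seq sigma = iota h (k - h) ++ iota 0 h.
Proof.
  move=> [h [Hh Hs]]; exists h => //.
  have -> : perm_seq sigma = [seq ((i + h) %% k)%N | i <- iota 0 k].
    by rewrite /perm_seq -val_enum_ord -map_comp; apply: eq_map => i /=; rewrite Hs.
  have -> : iota 0 k = iota 0 (k - h) ++ iota (k - h) h.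
    by rewrite -{1}(subnK (ltnW Hh)) iotaD add0n.
  rewrite map_cat; congr (_ ++ _).
  - have -> : iota h (k - h) = [seq (h + i)%N | i <- iota 0 (k - h)] by rewrite -iotaDl addn0.
    apply/eq_in_map => i.
    by rewrite mem_iota => /andP [_ Hi] /=; rewrite modn_small; lia.
  - have -> : iota (k - h) h = [seq (k - h + i)%N | i <- iota 0 h] by rewrite -iotaDl addn0.
    rewrite -map_comp -[in RHS](map_id (iota 0 h)); apply/eq_in_map => i.
    rewrite mem_iota => /andP [_ Hi] /=.
    by rewrite (_ : (k - h + i + h = k + i)%N) ?modnDl ?modn_small; lia.
Qed.

Lemma cyclic_shift_not_closed gamma theta (m : Z) k (sigma : 'S_k) C :
  gamma 0 <> gamma 1 -> theta 1 - theta 0 = 2 * PI * IZR m -> (0 < k)%N ->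
  is_cyclic_shift sigma -> in_int_Dk k C -> ~ closed_C1 (rearr gamma theta sigma C).
Proof.
  move=> Hg Hth Hk /perm_seq_cyclic_shift [h Hh Es] HC.
  rewrite (rearr_closed_iff gamma sigma Hk HC Hth) Es chain_disp_cat !chain_disp_iota chain_turn_iota.
  rewrite subnKC ?(ltnW Hh) // add0n cutv0 cutvk // (chords_period gamma _ _ Hth).
  move/rot_eq_origin => E; apply: Hg.
  by apply: pt2_ext; move: E => [E1 E2]; lra.
Qed.

(** * Non-cyclic permutations *)

(* For i1 < i2 < i3, [inversion s i1 i2 + inversion s i2 i3 - inversion s i1 i3] is 0 if the
   three occur in [s] in cyclic order, and 1 otherwise. *)
Definition inversion (s : seq nat) (p q : nat) : R :=
  if (index q s < index p s)%N then 1 else 0.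

Lemma inversion01 s p q : inversion s p q = 0 \/ inversion s p q = 1.
Proof. by rewrite /inversion; case: ifP; [right | left]. Qed.

Lemma filter_pair (s : seq nat) p q : uniq s -> p \in s -> q \in s -> p != q ->
  [seq i <- s | (i == p) || (i == q)] =
  if (index q s < index p s)%N then [:: q; p] else [:: p; q].
Proof.
  elim: s => //= x s IH /andP [Hx Hu].
  have filter1 y z : y \notin s -> z \in s -> [seq i <- s | (i == y) || (i == z)] = [:: z].
    move=> Hy Hz; rewrite -(filter_pred1_uniq Hu Hz); apply: eq_in_filter => i Hi /=.
    by case: eqP => // Ei; move: Hy; rewrite -Ei Hi.
  rewrite !inE; case: (eqVneq x p) => [<- | Hxp]; case: (eqVneq x q) => [<- | Hxq] //=.
  - by move=> _ Hq _; rewrite filter1.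
  - by move=> Hp _ _; rewrite (eq_filter (fun i => orbC (i == p) _)) filter1.
  - by move=> Hp Hq Hpq; rewrite ltnS IH.
Qed.

Lemma chain_disp_two_pieces (theta : R -> R) (gamma : R -> pt2) (c : nat -> R) (m : Z) s p q :
  theta 1 - theta 0 = 2 * PI * IZR m ->
  uniq s -> p \in s -> q \in s -> p != q ->
  (forall i, i \in s -> i != p -> i != q -> c i = c i.+1) ->
  c p = 0 -> c p.+1 = c q -> c q.+1 = 1 ->
  chain_disp theta gamma c 0 s = rot (- theta (c q * inversion s p q)) (psub (gamma 1) (gamma 0)).
Proof.
  move=> Hth Hu Hp Hq Hpq Hflat Hp0 Hpq' Hq1.
  rewrite (@chain_disp_filter _ _ _ (fun i => (i == p) || (i == q))); last first.
    by move=> i Hi; rewrite negb_or => /andP [? ?]; apply: Hflat.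
  rewrite filter_pair // /inversion; case: ifP => _ /=; rewrite Hq1 Hp0 Hpq'.
  - have := chords_period gamma 0 (c q) Hth; rewrite Rminus_0_l Rmult_1_r => <-.
    by apply: pt2_ext => /=; ring.
  - rewrite Rmult_0_r Rminus_0_l (_ : 0 + _ - _ = - theta 0); last ring.
    by apply: pt2_ext => /=; ring.
Qed.

Lemma not_cyclic_shift_jump k (sigma : 'S_k) : (0 < k)%N -> ~ is_cyclic_shift sigma ->
  exists2 j, (j.+1 < k)%N &
    nth 0%N (perm_seq sigma) j.+1 <> ((nth 0%N (perm_seq sigma) j + 1) %% k)%N.
Proof.
  move=> Hk Hnc; apply: NNPP => Hall; apply: Hnc.
  set f := nth 0%N (perm_seq sigma).
  have Hf0 : (f 0%N < k)%N by rewrite -(mem_perm_seq sigma) mem_nth ?size_perm_seq.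
  have Hf j : (j < k)%N -> f j = ((f 0%N + j) %% k)%N.
    elim: j => [|j IH] Hj; first by rewrite addn0 modn_small.
    have Hstep : f j.+1 = ((f j + 1) %% k)%N by apply: NNPP => Hne; apply: Hall; exists j.
    by rewrite Hstep IH 1?ltnW // modnDml -addnA addn1.
  exists (f 0%N); split=> // i.
  by rewrite -nth_perm_seq -/f Hf // addnC.
Qed.

Lemma inversion_triple k (sigma : 'S_k) : (0 < k)%N -> ~ is_cyclic_shift sigma ->
  exists i1 i2 i3, [/\ (i1 < i2)%N, (i2 < i3)%N, (i3 < k)%N &
    inversion (perm_seq sigma) i1 i2 + inversion (perm_seq sigma) i2 i3
    - inversion (perm_seq sigma) i1 i3 = 1].
Proof.
  move=> Hk Hnc; have [j Hj Hjump] := not_cyclic_shift_jump Hk Hnc.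
  set s := perm_seq sigma in Hjump *.
  have Hsz : size s = k := size_perm_seq sigma.
  have Hmem i : (i \in s) = (i < k)%N := mem_perm_seq sigma i.
  set a := nth 0%N s j in Hjump; set b := nth 0%N s j.+1 in Hjump.
  have Ha : (a < k)%N by rewrite -Hmem mem_nth // Hsz; lia.
  have Hb : (b < k)%N by rewrite -Hmem mem_nth // Hsz.
  have Pa : index a s = j by rewrite index_uniq ?perm_seq_uniq // Hsz; lia.
  have Pb : index b s = j.+1 by rewrite index_uniq ?perm_seq_uniq // Hsz.
  have Hab : a <> b by move=> E; move: Pb; rewrite -E Pa; lia.
  set c := ((a + 1) %% k)%N in Hjump.
  have Hc : c \in s by rewrite Hmem ltn_mod.
  set P := index c s.
  have HPc : nth 0%N s P = c := nth_index 0%N Hc.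
  have HPj : P <> j.
    move=> EP; move: HPc; rewrite EP -/a /c.
    by case: (ltnP (a + 1) k) => [Hlt | Hge]; [rewrite modn_small | rewrite (_ : a + 1 = k)%N ?modnn]; lia.
  have HPj1 : P <> j.+1 by move=> EP; apply: Hjump; rewrite -HPc EP.
  rewrite /inversion.
  case: (ltnP (a + 1) k) => Ha1.
  - have Ec : c = (a + 1)%N by rewrite /c modn_small.
    case: (ltnP (a + 1) b) => Ha1b.
    + exists a, (a + 1)%N, b; split; try lia.
      rewrite -Ec Pa Pb -/P.
      by case: (ltnP P j) => ?; case: (ltnP j.+1 P) => ?; case: (ltnP j.+1 j) => ? /=; lia || lra.
    + have Hba : (b < a)%N.
        have Hbc : b <> (a + 1)%N by rewrite -Ec.
        lia.
      exists b, a, (a + 1)%N; split; try lia.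
      rewrite -Ec Pa Pb -/P.
      by case: (ltnP j j.+1) => ?; case: (ltnP P j) => ?; case: (ltnP P j.+1) => ? /=; lia || lra.
  - have Ec : c = 0%N by rewrite /c (_ : a + 1 = k)%N ?modnn //; lia.
    have Hb0 : b <> 0%N by move=> Eb; apply: Hjump; rewrite Eb Ec.
    exists 0%N, b, a; split; try lia.
    rewrite -Ec Pa Pb -/P.
    by case: (ltnP j.+1 P) => ?; case: (ltnP j j.+1) => ?; case: (ltnP j P) => ? /=; lia || lra.
Qed.

(** * A two-parameter family of cuts *)

Lemma deriv01_cont01 f s l : deriv01 f s l -> cont01 f s.
Proof.
  move=> Hd e He; have [d [Hd0 Hq]] := Hd 1 Rlt_0_1.
  have Hl : 0 < Rabs l + 1 by have := Rabs_pos l; lra.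
  exists (Rmin d (e / (Rabs l + 1))); split; first by apply: Rmin_pos => //; apply: Rdiv_lt_0_compat.
  move=> t Ht /Rmin_Rgt [Htd Hte]; have [-> | Hts] := Req_dec t s.
    by rewrite Rminus_diag Rabs_R0.
  have Hq' := Hq t Ht Hts Htd; set q := (f t - f s) / (t - s) in Hq'.
  have -> : f t - f s = q * (t - s) by rewrite /q; field; lra.
  have := Rabs_triang_inv q l; rewrite Rabs_mult => Hb.
  have : Rabs (t - s) * (Rabs l + 1) < e.
    by move: Hte; rewrite /Rdiv => /(Rmult_lt_compat_r (Rabs l + 1) _ _ Hl); rewrite Rmult_assoc Rinv_l; lra.
  have : Rabs q * Rabs (t - s) <= (Rabs l + 1) * Rabs (t - s).
    by apply: Rmult_le_compat_r; [exact: Rabs_pos | lra].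
  lra.
Qed.

Definition clamp01 (x : R) : R := Rmax 0 (Rmin 1 x).

Lemma clamp01_in x : in01 (clamp01 x).
Proof. by rewrite /in01 /clamp01 /Rmax /Rmin; repeat case: Rle_dec; lra. Qed.

Lemma clamp01_id x : in01 x -> clamp01 x = x.
Proof. by rewrite /in01 /clamp01 /Rmax /Rmin; repeat case: Rle_dec; lra. Qed.

Lemma continuous_clamp01 f : (forall s, in01 s -> cont01 f s) ->
  forall x, continuous (fun y => f (clamp01 y)) x.
Proof.
  move=> Hf x; apply/filterlim_locally => e.
  have [d [Hd Hfd]] := Hf _ (clamp01_in x) e (cond_pos e).
  exists (mkposreal d Hd) => y Hy; apply: Hfd; first exact: clamp01_in.
  have : Rabs (clamp01 y - clamp01 x) <= Rabs (y - x).
    by rewrite /clamp01 /Rmax /Rmin /Rabs; repeat destruct Rle_dec; repeat destruct Rcase_abs; lra.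
  have : Rabs (y - x) < d := Hy.
  lra.
Qed.

(* The cut with nondegenerate arcs i1, i2, i3 only: [0, x], [x, y] and [y, 1]. *)
Definition step_cut (i1 i2 i3 : nat) (x y : R) (i : nat) : R :=
  if (i <= i1)%N then 0 else if (i <= i2)%N then x else if (i <= i3)%N then y else 1.

Ltac step_cut_cases := rewrite /step_cut; repeat (case: ifP => ?); by [lia | ring].

Lemma step_cut_flat i1 i2 i3 x y i : i != i1 -> i != i2 -> i != i3 ->
  step_cut i1 i2 i3 x y i = step_cut i1 i2 i3 x y i.+1.
Proof. move=> /eqP ? /eqP ? /eqP ?; step_cut_cases. Qed.

Lemma step_cut_mono i1 i2 i3 x y i : 0 <= x <= y -> y <= 1 ->
  step_cut i1 i2 i3 x y i <= step_cut i1 i2 i3 x y i.+1.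
Proof. by move=> ? ?; rewrite /step_cut; repeat (case: ifP => ?); lia || lra. Qed.

Lemma step_cut_range i1 i2 i3 x y i : 0 <= x <= y -> y <= 1 -> 0 <= step_cut i1 i2 i3 x y i <= 1.
Proof. by move=> ? ?; rewrite /step_cut; repeat (case: ifP => ?); lra. Qed.

Definition bump (u v : R) : R := u * (1 - u) * (v * (1 - v)).

Lemma bump_range u v : in01 u -> in01 v -> 0 <= bump u v <= 1.
Proof.
  rewrite /in01 /bump => Hu Hv.
  have : 0 <= u * (1 - u) <= 1 by nra.
  have : 0 <= v * (1 - v) <= 1 by nra.
  by split; nra.
Qed.

Lemma bump_gt0 u v : 0 < u < 1 -> 0 < v < 1 -> 0 < bump u v.
Proof. by rewrite /bump => Hu Hv; apply: Rmult_lt_0_compat; nra. Qed.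

Section CutFamily.
Variables (k i1 i2 i3 : nat).
Hypotheses (H12 : (i1 < i2)%N) (H23 : (i2 < i3)%N) (H3k : (i3 < k)%N).

Let k_gt0 : (0 < k)%N. Proof. by lia. Qed.

(* A convex combination of the degenerate cut [step_cut], which it equals on the boundary
   of the square, and the uniform cut [grid k]; inside the square it lies in int(D_k). *)
Definition cut_family (u v : R) (i : nat) : R :=
  (1 - bump u v) * step_cut i1 i2 i3 (u * v) v i + bump u v * grid k i.

Let step_cut_uv u v : in01 u -> in01 v -> 0 <= u * v <= v /\ v <= 1.
Proof. by rewrite /in01 => Hu Hv; split; [nra | lra]. Qed.

Lemma cutv_cut_family u v : cutv k (cut_family u v) = cut_family u v.
Proof.
  apply: functional_extensionality => i; rewrite /cutv /cut_family.
  case: (Nat.eqb_spec i 0) => [-> | _]; first by rewrite grid0 /step_cut /=; ring.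
  case: (Nat.eqb_spec i k) => [-> | _] //.
  by rewrite (gridN k_gt0) (_ : step_cut i1 i2 i3 _ _ k = 1); [ring | step_cut_cases].
Qed.

Lemma cut_family_gap u v i : in01 u -> in01 v ->
  cut_family u v i.+1 - cut_family u v i >= bump u v / INR k.
Proof.
  move=> Hu Hv; have [Hb0 Hb1] := bump_range Hu Hv.
  have [Hx Hy] := step_cut_uv Hu Hv.
  have := @step_cut_mono i1 i2 i3 (u * v) v i Hx Hy.
  rewrite /cut_family (gridS k_gt0) /Rdiv; nra.
Qed.

Lemma cut_family_int u v : 0 < u < 1 -> 0 < v < 1 -> in_int_Dk k (cut_family u v).
Proof.
  move=> Hu Hv i _; rewrite cutv_cut_family.
  have Hk : 0 < INR k by apply: lt_0_INR; lia.
  have := @cut_family_gap u v i ltac:(rewrite /in01; lra) ltac:(rewrite /in01; lra).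
  by have := Rdiv_lt_0_compat _ _ (bump_gt0 Hu Hv) Hk; lra.
Qed.

Lemma cut_family_range u v i : in01 u -> in01 v -> (i <= k)%N -> in01 (cut_family u v i).
Proof.
  move=> Hu Hv Hi; have [Hb0 Hb1] := bump_range Hu Hv.
  have [Hx Hy] := step_cut_uv Hu Hv.
  have [Hs0 Hs1] := @step_cut_range i1 i2 i3 (u * v) v i Hx Hy.
  have [Hg0 Hg1] := grid_in01 k_gt0 Hi.
  by rewrite /in01 /cut_family; split; nra.
Qed.

Lemma cut_family_boundary u v : bump u v = 0 -> cut_family u v = step_cut i1 i2 i3 (u * v) v.
Proof. by move=> Hb; apply: functional_extensionality => i; rewrite /cut_family Hb; ring. Qed.

Lemma continuous2_cut_family i : continuous2 (fun u v => cut_family u v i).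
Proof.
  rewrite /cut_family /step_cut /bump.
  by case: (i <= i1)%N; case: (i <= i2)%N; case: (i <= i3)%N; continuity2.
Qed.

End CutFamily.

Section Existence.
Variables (gamma : R -> pt2) (theta : R -> R) (m : Z) (k : nat) (sigma : 'S_k) (i1 i2 i3 : nat).
Hypothesis Hcont : forall s, in01 s ->
  [/\ cont01 theta s, cont01 (fun t => fst (gamma t)) s & cont01 (fun t => snd (gamma t)) s].
Hypotheses (Hgamma : gamma 0 <> gamma 1) (Hth : theta 1 - theta 0 = 2 * PI * IZR m).
Hypotheses (H12 : (i1 < i2)%N) (H23 : (i2 < i3)%N) (H3k : (i3 < k)%N).

Let s := perm_seq sigma.

Let thc x := theta (clamp01 x).
Let gac x := gamma (clamp01 x).
Let V := psub (gamma 1) (gamma 0).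
Definition family_disp u v : pt2 := chain_disp thc gac (cut_family k i1 i2 i3 u v) 0 s.
Local Notation G := family_disp.

Let V_neq0 : V <> (0, 0).
Proof. by move=> [E1 E2]; apply: Hgamma; apply: pt2_ext; lra. Qed.

Let thc_period : thc 1 - thc 0 = 2 * PI * IZR m.
Proof. by rewrite /thc (clamp01_id in01_0) (clamp01_id in01_1). Qed.

Let continuous_thc x : continuous thc x.
Proof. by apply: continuous_clamp01 => t /Hcont []. Qed.

Lemma continuous2_family_disp : continuous2 (fun u v => fst (G u v)) /\ continuous2 (fun u v => snd (G u v)).
Proof.
  apply: continuous2_chain_disp; [exact: continuous_thc | | | | exact: continuous2_const].
  - by apply: (continuous_clamp01 (f := fun t => fst (gamma t))) => t /Hcont [].
  - by apply: (continuous_clamp01 (f := fun t => snd (gamma t))) => t /Hcont [].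
  - exact: continuous2_cut_family.
Qed.

Let in_s i : (i \in s) = (i < k)%N.
Proof. exact: mem_perm_seq. Qed.

Lemma family_disp_eq0_closed u v : 0 < u < 1 -> 0 < v < 1 -> G u v = (0, 0) ->
  closed_C1 (rearr gamma theta sigma (cut_family k i1 i2 i3 u v)).
Proof.
  move=> Hu Hv HG; have HC := cut_family_int H12 H23 H3k Hu Hv.
  have Hk : (0 < k)%N by lia.
  apply/(rearr_closed_iff gamma sigma Hk HC Hth).
  rewrite (cutv_cut_family H12 H23 H3k) -HG.
  apply: eq_chain_disp => i j Hi Hj.
  have Hjk : (j <= k)%N by move: Hi; rewrite in_s; case: Hj => ->; lia.
  have Hc : in01 (cut_family k i1 i2 i3 u v j).
    by apply: cut_family_range => //; rewrite /in01; lra.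
  by rewrite /thc /gac clamp01_id.
Qed.

Lemma chain_disp_step_cut x y p q r z :
  perm_eq [:: p; q; r] [:: i1; i2; i3] -> step_cut i1 i2 i3 x y r = step_cut i1 i2 i3 x y r.+1 ->
  step_cut i1 i2 i3 x y p = 0 -> step_cut i1 i2 i3 x y p.+1 = z -> step_cut i1 i2 i3 x y q = z ->
  step_cut i1 i2 i3 x y q.+1 = 1 ->
  chain_disp thc gac (step_cut i1 i2 i3 x y) 0 s = rot (- thc (z * inversion s p q)) V.
Proof.
  move=> Hperm Hr Hp0 Hpz Hqz Hq1.
  have Hmem i : (i \in [:: p; q; r]) = (i \in [:: i1; i2; i3]) := perm_mem Hperm i.
  have Huniq : uniq [:: p; q; r] by rewrite (perm_uniq Hperm) /= !inE; apply/and3P; split; lia.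
  have in_s' i : i \in [:: p; q; r] -> i \in s by rewrite Hmem in_s !inE; lia.
  have -> : V = psub (gac 1) (gac 0) by rewrite /gac (clamp01_id in01_0) (clamp01_id in01_1).
  rewrite -Hqz; apply: (chain_disp_two_pieces gac thc_period);
    rewrite ?in_s' ?inE ?eqxx ?orbT ?Hpz ?Hqz //.
  - exact: perm_seq_uniq.
  - by move: Huniq; rewrite /= inE negb_or => /andP [/andP []].
  - move=> i Hi Hip Hiq; case: (eqVneq i r) => [-> // | Hir].
    have : i \notin [:: i1; i2; i3] by rewrite -Hmem !inE (negbTE Hip) (negbTE Hiq) (negbTE Hir).
    by rewrite !inE !negb_or => /and3P [? ? ?]; apply: step_cut_flat.
Qed.

Lemma family_disp_boundary u : in01 u ->
  [/\ G u 0 = rot (- thc 0) V, G u 1 = rot (- thc (u * inversion s i1 i2)) V,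
      G 0 u = rot (- thc (u * inversion s i2 i3)) V & G 1 u = rot (- thc (u * inversion s i1 i3)) V].
Proof.
  move=> Hu.
  have Hb u' v' : u' * (1 - u') * (v' * (1 - v')) = 0 ->
      G u' v' = chain_disp thc gac (step_cut i1 i2 i3 (u' * v') v') 0 s.
    by move=> Hb; rewrite /G cut_family_boundary.
  have perm213 : perm_eq [:: i2; i3; i1] [:: i1; i2; i3] by rewrite (perm_catC [:: i2; i3] [:: i1]).
  have perm132 : perm_eq [:: i1; i3; i2] [:: i1; i2; i3] by rewrite perm_cons (perm_catC [:: i3] [:: i2]).
  split; rewrite Hb; try ring.
  - by rewrite Rmult_0_r (@chain_disp_step_cut _ _ _ _ _ 0 perm132) ?Rmult_0_l //; step_cut_cases.
  - by rewrite Rmult_1_r (@chain_disp_step_cut _ _ _ _ _ u (perm_refl _)) //; step_cut_cases.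
  - by rewrite Rmult_0_l (@chain_disp_step_cut _ _ _ _ _ u perm213) //; step_cut_cases.
  - by rewrite Rmult_1_l (@chain_disp_step_cut _ _ _ _ _ u perm132) //; step_cut_cases.
Qed.

Let edge_turn e : e = 0 \/ e = 1 -> - thc (1 * e) - - thc (0 * e) = - (e * (2 * PI * IZR m)).
Proof. by case=> ->; rewrite ?Rmult_0_r ?Rmult_1_l ?Rmult_0_l -?thc_period; ring. Qed.

Let continuous_edge e x : continuous (fun u => - thc (u * e)) x.
Proof.
  apply: (continuous_opp (fun u => thc (u * e))); apply: (continuous_comp (fun u => u * e) thc) => //.
  by apply: (continuous_mult (fun u => u) (fun _ => e)); [apply: continuous_id | apply: continuous_const].
Qed.

Lemma family_disp_has_zero : m <> 0%Z ->
  inversion s i1 i2 + inversion s i2 i3 - inversion s i1 i3 = 1 ->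
  exists u v, [/\ 0 < u < 1, 0 < v < 1 & G u v = (0, 0)].
Proof.
  move=> Hm Hinv; apply: NNPP => Hno.
  have HG0 u v : in01 u -> in01 v -> G u v <> (0, 0).
  { have [[Hu' Hv'] | Hbd] := classic (0 < u < 1 /\ 0 < v < 1).
      by move=> _ _ HG; apply: Hno; exists u, v.
    move=> Hu Hv; have [Bu0 Bu1 _ _] := family_disp_boundary Hu; have [_ _ Bv0 Bv1] := family_disp_boundary Hv.
    have [-> | [-> | [-> | ->]]] : u = 0 \/ u = 1 \/ v = 0 \/ v = 1.
      by apply: NNPP => H; apply: Hbd; move: Hu Hv; rewrite /in01; lra.
    all: by rewrite ?Bu0 ?Bu1 ?Bv0 ?Bv1 => /rot_eq_origin /V_neq0. }
  have [C1 C2] := continuous2_family_disp.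
  have := boundary_winding_eq0 V_neq0 C1 C2 HG0 (@continuous_edge 0) (@continuous_edge (inversion s i1 i2))
    (@continuous_edge (inversion s i2 i3)) (@continuous_edge (inversion s i1 i3)).
  have Eb u : in01 u -> G u 0 = rot (- thc (u * 0)) V by case/family_disp_boundary; rewrite Rmult_0_r.
  have Et u : in01 u -> G u 1 = rot (- thc (u * inversion s i1 i2)) V by case/family_disp_boundary.
  have El v : in01 v -> G 0 v = rot (- thc (v * inversion s i2 i3)) V by case/family_disp_boundary.
  have Er v : in01 v -> G 1 v = rot (- thc (v * inversion s i1 i3)) V by case/family_disp_boundary.
  move=> /(_ Eb Et El Er); rewrite !edge_turn; try by [left | apply: inversion01].
  have HX : 2 * PI * IZR m <> 0.
    by apply: Rmult_integral_contrapositive; split; [have := PI_RGT_0; lra | exact: not_0_IZR].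
  by move=> E; apply: HX; rewrite -[LHS]Rmult_1_r -Hinv; lra.
Qed.

End Existence.

Lemma not_cyclic_shift_closed gamma theta (m : Z) k (sigma : 'S_k) :
  (forall s, in01 s -> [/\ cont01 theta s, cont01 (fun t => fst (gamma t)) s
                          & cont01 (fun t => snd (gamma t)) s]) ->
  gamma 0 <> gamma 1 -> theta 1 - theta 0 = 2 * PI * IZR m -> m <> 0%Z -> (0 < k)%N ->
  ~ is_cyclic_shift sigma ->
  exists C, in_int_Dk k C /\ closed_C1 (rearr gamma theta sigma C).
Proof.
  move=> Hcont Hg Hth Hm Hk Hnc.
  have [i1 [i2 [i3 [H12 H23 H3k Hinv]]]] := inversion_triple Hk Hnc.
  have [u [v [Hu Hv HG]]] := family_disp_has_zero Hcont Hg Hth H12 H23 H3k Hm Hinv.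
  exists (cut_family k i1 i2 i3 u v); split; first exact: cut_family_int.
  exact: (@family_disp_eq0_closed gamma theta m k sigma i1 i2 i3 Hth H12 H23 H3k u v Hu Hv HG).
Qed.

Theorem theorem4p1 (gamma : R -> pt2) (theta : R -> R) (c : R) (m : Z)
  (k : nat) (sigma : 'S_k) :
  0 < c ->
  (forall s, 0 <= s <= 1 ->
     cont01 theta s /\
     deriv01 (fun t => fst (gamma t)) s (c * cos (theta s)) /\
     deriv01 (fun t => snd (gamma t)) s (c * sin (theta s))) ->
  gamma 0 <> gamma 1 ->
  theta 1 - theta 0 = 2 * PI * IZR m ->
  m <> 0%Z ->
  (3 <= k)%nat ->
  ((exists C : nat -> R, in_int_Dk k C /\ closed_C1 (rearr gamma theta sigma C))
   <-> ~ is_cyclic_shift sigma).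
Proof.
  move=> _ Hreg Hg Hth Hm Hk; have Hk0 : (0 < k)%N by lia.
  split=> [[C [HC Hcl]] Hcyc | Hnc].
  - exact: cyclic_shift_not_closed Hg Hth Hk0 Hcyc HC Hcl.
  - apply: not_cyclic_shift_closed Hg Hth Hm Hk0 Hnc => s Hs.
    have [H1 [H2 H3]] := Hreg s Hs.
    by split; [exact: H1 | exact: deriv01_cont01 H2 | exact: deriv01_cont01 H3].
Qed.
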